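(* Let $a>1$ and let $f$ be a continuous and bounded real function on $X=[0,\infty)\times[0,\infty)$. For all $m,n\in\mathbb{N}$ and $(x,y)\in X$, \[ |\hat{Y}_{m,n,a}(f;x,y)-f(x,y)|\leq 2\,\omega(f;\delta_{m,n}), \qquad |\hat{Y}_{m,n,a}(f;x,y)-f(x,y)|\leq 2\{\omega_1(f,\delta_m)+\omega_2(f,\delta_n)\}, \] where \[ \delta_m=\sqrt{\frac{x\left(m^2x(a^{1/m}-1)^2-(a^{1/m}-1)\log a\,(2mx-1)+x(\log a)^2\right)}{m^2(a^{1/m}-1)^2}}, \] \[ \delta_n=\sqrt{\frac{y\left(n^2y(a^{1/n}-1)^2-(a^{1/n}-1)\log a\,(2ny-1)+y(\log a)^2\right)}{n^2(a^{1/n}-1)^2}}, \] and $\delta_{m,n}=\sqrt{\delta_m^2+\delta_n^2}$.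
   Context: For $m,n\in\mathbb{N}$, $(x,y)\in X$ and integers $k_1,k_2\ge0$ let \[ s_{m,n,k_1,k_2}^a(x,y)=a^{-\frac{x}{a^{1/m}-1}}\,a^{-\frac{y}{a^{1/n}-1}}\,\frac{x^{k_1}y^{k_2}(\log a)^{k_1+k_2}}{(a^{1/m}-1)^{k_1}(a^{1/n}-1)^{k_2}\,k_1!\,k_2!}, \] \[ \hat{Y}_{m,n,a}(f;x,y)=\sum_{k_1=0}^{\infty}\sum_{k_2=0}^{\infty}s_{m,n,k_1,k_2}^a(x,y)\,f\!\left(\tfrac{k_1}{m},\tfrac{k_2}{n}\right). \] (The quantities $\delta_m^2,\delta_n^2$ are $\hat{Y}_{m,n,a}((t-x)^2;x,y)$ and $\hat{Y}_{m,n,a}((s-y)^2;x,y)$.) The total modulus of continuity is $\omega(f,\delta)=\sup\{|f(t,s)-f(x,y)|:(t,s),(x,y)\in X,\ \sqrt{(t-x)^2+(s-y)^2}\le\delta\}$; the partial moduli are $\omega_1(f,\delta)=\sup\{|f(u_1,y)-f(u_2,y)|:u_1,u_2,y\ge0,\ |u_1-u_2|\le\delta\}$ and $\omega_2(f,\delta)=\sup\{|f(x,v_1)-f(x,v_2)|:x,v_1,v_2\ge0,\ |v_1-v_2|\le\delta\}$. *)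

From Stdlib Require Import Reals Factorial.
From Coquelicot Require Import Coquelicot.
Open Scope R_scope.

Definition inX (x y : R) : Prop := 0 <= x /\ 0 <= y.

Definition continuous_on_X (f : R -> R -> R) : Prop :=
  forall x y, inX x y -> forall eps, 0 < eps -> exists del, 0 < del /\
    forall t s, inX t s -> sqrt ((t - x)^2 + (s - y)^2) < del ->
      Rabs (f t s - f x y) < eps.

Definition bounded_on_X (f : R -> R -> R) : Prop :=
  exists M, forall x y, inX x y -> Rabs (f x y) <= M.

Definition aroot (a : R) (m : nat) : R := Rpower a (/ INR m).

Definition s_kernel (a : R) (m n k1 k2 : nat) (x y : R) : R :=
  Rpower a (- (x / (aroot a m - 1))) * Rpower a (- (y / (aroot a n - 1))) *
  (x ^ k1 * y ^ k2 * (ln a) ^ (k1 + k2) /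
   ((aroot a m - 1) ^ k1 * (aroot a n - 1) ^ k2 * INR (Factorial.fact k1) * INR (Factorial.fact k2))).

Definition Yhat (a : R) (m n : nat) (f : R -> R -> R) (x y : R) : R :=
  Series (fun k1 => Series (fun k2 =>
    s_kernel a m n k1 k2 x y * f (INR k1 / INR m) (INR k2 / INR n))).

(* total modulus of continuity (sup over X; finite for bounded f) *)
Definition omega (f : R -> R -> R) (d : R) : R :=
  real (Lub_Rbar (fun r => exists t s x y, inX t s /\ inX x y /\
     sqrt ((t - x)^2 + (s - y)^2) <= d /\ r = Rabs (f t s - f x y))).

Definition omega1 (f : R -> R -> R) (d : R) : R :=
  real (Lub_Rbar (fun r => exists u1 u2 y, 0 <= u1 /\ 0 <= u2 /\ 0 <= y /\
     Rabs (u1 - u2) <= d /\ r = Rabs (f u1 y - f u2 y))).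

Definition omega2 (f : R -> R -> R) (d : R) : R :=
  real (Lub_Rbar (fun r => exists x v1 v2, 0 <= x /\ 0 <= v1 /\ 0 <= v2 /\
     Rabs (v1 - v2) <= d /\ r = Rabs (f x v1 - f x v2))).

Definition delta (a : R) (m : nat) (x : R) : R :=
  sqrt (x * (INR m ^ 2 * x * (aroot a m - 1) ^ 2
             - (aroot a m - 1) * ln a * (2 * INR m * x - 1)
             + x * (ln a) ^ 2)
        / (INR m ^ 2 * (aroot a m - 1) ^ 2)).

Definition delta2 (a : R) (m n : nat) (x y : R) : R :=
  sqrt (delta a m x ^ 2 + delta a n y ^ 2).

(* The kernel s^a_{m,n,k1,k2}(x,y) is the product of two Poisson distributions, of rates
   u = x log a / (a^{1/m} - 1) and v = y log a / (a^{1/n} - 1), sampled at the nodes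
   (k1/m, k2/n); the second moment of k1/m - x under the first one is exactly delta_m^2.
   Cutting a segment of length L into floor(L/d) + 1 pieces of length at most d gives
   |f P - f Q| <= w(d) (1 + |P - Q|^2 / d^2) for each of the three moduli w, and averaging
   this against the kernel yields w(d) (1 + delta_{m,n}^2 / d^2) = 2 w(d) for d = delta_{m,n}
   (resp. the analogous bound coordinatewise).  When a delta vanishes, x = 0 and the
   Poisson weight sits at k = 0, where the node is x itself. *)

From Stdlib Require Import Reals Factorial Lra Lia.
From Coquelicot Require Import Coquelicot.
Open Scope R_scope.

(* Stated at type [R], so that [cbn] turns Coquelicot's [plus]/[scal] in the side
   equations into [Rplus]/[Rmult] for [ring] and [field]. *)
Lemma is_series_ext_lim (a b : nat -> R) (la lb : R) :
  (forall k, a k = b k) -> la = lb -> is_series a la -> is_series b lb.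
Proof. intros Hab <-. apply is_series_ext, Hab. Qed.

Definition poisson (u : R) (k : nat) : R := exp (- u) * (u ^ k / INR (fact k)).

Lemma poisson_ge0 u k : 0 <= u -> 0 <= poisson u k.
Proof.
  intros Hu. unfold poisson. apply Rmult_le_pos; [left; apply exp_pos|].
  apply Rdiv_le_0_compat; [apply pow_le; exact Hu | apply INR_fact_lt_0].
Qed.

Lemma poisson_succ u k : INR (S k) * poisson u (S k) = u * poisson u k.
Proof.
  unfold poisson. rewrite fact_simpl, mult_INR. simpl pow.
  pose proof (INR_fact_neq_0 k). pose proof (not_0_INR _ (Nat.neq_succ_0 k)).
  field. auto.
Qed.

Lemma poisson0_support k : poisson 0 k <> 0 -> k = 0%nat.
Proof.
  destruct k as [|k]; [reflexivity|]. intros H. exfalso. apply H.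
  unfold poisson. rewrite pow_i by lia. unfold Rdiv. ring.
Qed.

Lemma is_series_poisson u : is_series (poisson u) 1.
Proof.
  assert (Hexp : is_series (fun k => / INR (fact k) * u ^ k) (exp u)).
  { apply is_pseries_R, is_exp_Reals. }
  eapply is_series_ext_lim; [| |exact (is_series_scal_l (exp (- u)) _ _ Hexp)].
  - intros k. unfold poisson. cbn. unfold Rdiv. ring.
  - cbn. rewrite <- exp_plus, Rplus_opp_l. apply exp_0.
Qed.

Lemma is_series_poisson_mean u : is_series (fun k => INR k * poisson u k) u.
Proof.
  apply is_series_decr_1.
  eapply is_series_ext_lim; [| |exact (is_series_scal_l u _ _ (is_series_poisson u))].
  - intros k. symmetry. apply poisson_succ.
  - cbn. ring.
Qed.

Lemma is_series_poisson_factorial2 u :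
  is_series (fun k => INR k * (INR k - 1) * poisson u k) (u ^ 2).
Proof.
  apply is_series_decr_1.
  eapply is_series_ext_lim; [| |exact (is_series_scal_l u _ _ (is_series_poisson_mean u))].
  - intros k. cbn -[INR poisson].
    replace (INR (S k) * (INR (S k) - 1) * poisson u (S k))
      with (INR k * (INR (S k) * poisson u (S k))) by (rewrite S_INR; ring).
    rewrite poisson_succ. ring.
  - cbn. ring.
Qed.

Lemma is_series_poisson_sq_dev u c x : c <> 0 ->
  is_series (fun k => poisson u k * (INR k / c - x) ^ 2) ((u / c - x) ^ 2 + u / c ^ 2).
Proof.
  intros Hc.
  pose proof (is_series_plus _ _ _ _ (is_series_poisson_factorial2 u)
    (is_series_plus _ _ _ _ (is_series_scal_l (1 - 2 * x * c) _ _ (is_series_poisson_mean u))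
                            (is_series_scal_l ((x * c) ^ 2) _ _ (is_series_poisson u)))) as H.
  eapply is_series_ext_lim; [| |exact (is_series_scal_l (/ c ^ 2) _ _ H)];
    [intros k|]; cbn -[INR poisson]; field; exact Hc.
Qed.

Lemma Series_abs_le (a b : nat -> R) (lb : R) :
  (forall k, Rabs (a k) <= b k) -> is_series b lb -> Rabs (Series a) <= lb.
Proof.
  intros Hab Hb.
  assert (Habs : ex_series (fun k => Rabs (a k))).
  { apply (@ex_series_le R_AbsRing R_CompleteNormedModule _ b); [|exists lb; exact Hb].
    intros k. change (norm ?z) with (Rabs z). rewrite Rabs_Rabsolu. apply Hab. }
  rewrite <- (is_series_unique _ _ Hb).
  apply Rle_trans with (1 := Series_Rabs _ Habs).
  apply Series_le; [|exists lb; exact Hb].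
  intros k. split; [apply Rabs_pos | apply Hab].
Qed.

Lemma Series_mean_dist_le (p g h : nat -> R) (c M H : R) :
  (forall k, 0 <= p k) -> is_series p 1 -> (forall k, Rabs (g k) <= M) ->
  (forall k, p k <> 0 -> Rabs (g k - c) <= h k) ->
  is_series (fun k => p k * h k) H ->
  Rabs (Series (fun k => p k * g k) - c) <= H.
Proof.
  intros Hp Sp Hg Hgh Sh.
  assert (Ep : ex_series p) by (exists 1; exact Sp).
  assert (Epg : ex_series (fun k => p k * g k)).
  { apply (@ex_series_le R_AbsRing R_CompleteNormedModule _ (fun k => p k * M)).
    - intros k. change (norm ?z) with (Rabs z).
      rewrite Rabs_mult, (Rabs_pos_eq (p k)) by apply Hp.
      apply Rmult_le_compat_l; [apply Hp | apply Hg].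
    - apply ex_series_scal_r, Ep. }
  assert (Hc : Series (fun k => p k * g k) - c = Series (fun k => p k * g k - p k * c)).
  { rewrite Series_minus, Series_scal_r, (is_series_unique _ _ Sp) by
      (assumption || apply ex_series_scal_r, Ep). ring. }
  rewrite Hc. apply (Series_abs_le _ _ _) with (2 := Sh).
  intros k. cbv beta. destruct (Req_dec (p k) 0) as [Hk|Hk].
  - rewrite Hk. replace (0 * g k - 0 * c) with 0 by ring. rewrite Rabs_R0. lra.
  - rewrite <- Rmult_minus_distr_l, Rabs_mult, (Rabs_pos_eq (p k)) by apply Hp.
    apply Rmult_le_compat_l; [apply Hp | apply Hgh, Hk].
Qed.

Lemma Series_iterated_mean_dist_le (p q e1 e2 : nat -> R) (F : nat -> nat -> R)
    (c M A C1 C2 D1 D2 : R) :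
  (forall k, 0 <= p k) -> (forall k, 0 <= q k) -> is_series p 1 -> is_series q 1 ->
  is_series (fun k => p k * e1 k) D1 -> is_series (fun k => q k * e2 k) D2 ->
  (forall k1 k2, Rabs (F k1 k2) <= M) ->
  (forall k1 k2, p k1 <> 0 -> q k2 <> 0 ->
     Rabs (F k1 k2 - c) <= A + C1 * e1 k1 + C2 * e2 k2) ->
  Rabs (Series (fun k1 => p k1 * Series (fun k2 => q k2 * F k1 k2)) - c)
    <= A + C1 * D1 + C2 * D2.
Proof.
  intros Hp Hq Sp Sq S1 S2 HF HFc.
  apply (Series_mean_dist_le _ _ (fun k1 => A + C1 * e1 k1 + C2 * D2) _ M); auto.
  - intros k1. rewrite <- (Rminus_0_r (Series _)).
    apply (Series_mean_dist_le _ _ (fun _ => M) _ M); auto.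
    + intros k2 _. rewrite Rminus_0_r. apply HF.
    + eapply is_series_ext_lim; [| |exact (is_series_scal_r M _ _ Sq)];
        [intros k2|]; cbv beta; ring.
  - intros k1 Hk1.
    apply (Series_mean_dist_le _ _ (fun k2 => A + C1 * e1 k1 + C2 * e2 k2) _ M); auto.
    eapply is_series_ext_lim;
      [| |exact (is_series_plus _ _ _ _ (is_series_scal_r (A + C1 * e1 k1) _ _ Sq)
                                         (is_series_scal_l C2 _ _ S2))];
      [intros k2|]; cbn; ring.
  - eapply is_series_ext_lim;
      [| |exact (is_series_plus _ _ _ _ (is_series_scal_r (A + C2 * D2) _ _ Sp)
                                         (is_series_scal_l C1 _ _ S1))];
      [intros k1|]; cbn; ring.
Qed.

Lemma grid_oscillation_le (g : R -> R) (W : R) (N : nat) :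
  (forall t t', 0 <= t <= 1 -> 0 <= t' <= 1 -> Rabs (t - t') <= / INR (S N) ->
     Rabs (g t - g t') <= W) ->
  Rabs (g 0 - g 1) <= INR (S N) * W.
Proof.
  intros Hg. set (K := INR (S N)).
  assert (HK : 0 < K) by apply lt_0_INR, Nat.lt_0_succ.
  assert (Hgrid : forall j, (j <= S N)%nat -> 0 <= INR j / K <= 1).
  { intros j Hj. split; [apply Rdiv_le_0_compat; [apply pos_INR | exact HK]|].
    apply (Rdiv_le_1 _ _ HK), le_INR, Hj. }
  assert (Hstep : forall j, (j <= S N)%nat -> Rabs (g 0 - g (INR j / K)) <= INR j * W).
  { induction j as [|j IH]; intros Hj.
    - replace (INR 0 / K) with 0 by (simpl; field; lra).
      unfold Rminus. rewrite Rplus_opp_r, Rabs_R0. simpl. lra.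
    - replace (g 0 - g (INR (S j) / K))
        with ((g 0 - g (INR j / K)) + (g (INR j / K) - g (INR (S j) / K))) by ring.
      eapply Rle_trans; [apply Rabs_triang|].
      replace (INR (S j) * W) with (INR j * W + W) by (rewrite S_INR; ring).
      apply Rplus_le_compat; [apply IH; lia|].
      apply Hg; [apply Hgrid; lia | apply Hgrid; exact Hj|].
      rewrite S_INR. replace (INR j / K - (INR j + 1) / K) with (- / K) by (field; lra).
      rewrite Rabs_Ropp, Rabs_pos_eq; [apply Rle_refl | left; apply Rinv_0_lt_compat, HK]. }
  replace 1 with (INR (S N) / K) by (apply Rinv_r, Rgt_not_eq, HK). apply Hstep, le_n.
Qed.

Lemma segment_oscillation_le (g : R -> R) (L d W : R) :
  0 <= L -> 0 < d -> 0 <= W ->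
  (forall t t', 0 <= t <= 1 -> 0 <= t' <= 1 -> Rabs (t - t') * L <= d ->
     Rabs (g t - g t') <= W) ->
  Rabs (g 0 - g 1) <= W + W / d ^ 2 * L ^ 2.
Proof.
  intros HL Hd HW Hg.
  (* Take N + 1 pieces with N = floor (L / d); since N is 0 or at least 1, N <= (L / d)^2. *)
  destruct (nfloor_ex (L / d) (Rdiv_le_0_compat _ _ HL Hd)) as [N [HN1 HN2]].
  assert (HK : 0 < INR (S N)) by apply lt_0_INR, Nat.lt_0_succ.
  apply Rle_trans with (INR (S N) * W).
  - apply grid_oscillation_le. intros t t' Ht Ht' Htt'. apply Hg; [exact Ht | exact Ht'|].
    apply Rle_trans with (/ INR (S N) * L); [apply Rmult_le_compat_r; assumption|].
    rewrite S_INR in HK |- *. apply (Rmult_le_reg_l (INR N + 1)); [exact HK|].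
    rewrite <- Rmult_assoc, Rinv_r, Rmult_1_l by lra.
    apply Rmult_lt_compat_r with (r := d) in HN2; [|exact Hd].
    unfold Rdiv in HN2. rewrite Rmult_assoc, Rinv_l, Rmult_1_r in HN2 by lra. lra.
  - replace (W / d ^ 2 * L ^ 2) with (W * (L / d) ^ 2) by (field; lra).
    assert (HNsq : INR N <= (L / d) ^ 2).
    { destruct N as [|N]; [simpl; nra|].
      assert (1 <= INR (S N)) by (apply (le_INR 1); lia). nra. }
    rewrite S_INR. nra.
Qed.

Lemma real_Lub_Rbar_ge (E : R -> Prop) (B r : R) :
  (forall r', E r' -> r' <= B) -> E r -> r <= real (Lub_Rbar E).
Proof.
  intros HB Hr. destruct (Lub_Rbar_correct E) as [Hub Hleast].
  specialize (Hub r Hr). specialize (Hleast (Finite B) HB).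
  destruct (Lub_Rbar E); simpl in *; tauto.
Qed.

Section Moduli.

Variables (f : R -> R -> R) (M : R).
Hypothesis f_bounded : forall x y, inX x y -> Rabs (f x y) <= M.

Lemma Rabs_f_sub_le t s x y : inX t s -> inX x y -> Rabs (f t s - f x y) <= 2 * M.
Proof.
  intros Hts Hxy. unfold Rminus. eapply Rle_trans; [apply Rabs_triang|].
  rewrite Rabs_Ropp. pose proof (f_bounded _ _ Hts). pose proof (f_bounded _ _ Hxy). lra.
Qed.

Lemma le_omega d t s x y : inX t s -> inX x y -> sqrt ((t - x) ^ 2 + (s - y) ^ 2) <= d ->
  Rabs (f t s - f x y) <= omega f d.
Proof.
  intros Hts Hxy Hd. apply real_Lub_Rbar_ge with (2 * M).
  - intros r (t' & s' & x' & y' & H1 & H2 & _ & ->). apply Rabs_f_sub_le; assumption.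
  - exists t, s, x, y. auto.
Qed.

Lemma le_omega1 d u1 u2 y : 0 <= u1 -> 0 <= u2 -> 0 <= y -> Rabs (u1 - u2) <= d ->
  Rabs (f u1 y - f u2 y) <= omega1 f d.
Proof.
  intros H1 H2 Hy Hd. apply real_Lub_Rbar_ge with (2 * M).
  - intros r (v1 & v2 & z & G1 & G2 & Gz & _ & ->). apply Rabs_f_sub_le; split; assumption.
  - exists u1, u2, y. auto.
Qed.

Lemma le_omega2 d x v1 v2 : 0 <= x -> 0 <= v1 -> 0 <= v2 -> Rabs (v1 - v2) <= d ->
  Rabs (f x v1 - f x v2) <= omega2 f d.
Proof.
  intros Hx H1 H2 Hd. apply real_Lub_Rbar_ge with (2 * M).
  - intros r (z & w1 & w2 & Gz & G1 & G2 & _ & ->). apply Rabs_f_sub_le; split; assumption.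
  - exists x, v1, v2. auto.
Qed.

Lemma omega_ge0 d : 0 <= d -> 0 <= omega f d.
Proof.
  intros Hd. apply Rle_trans with (Rabs (f 0 0 - f 0 0)); [apply Rabs_pos|].
  apply le_omega; try (split; lra).
  replace ((0 - 0) ^ 2 + (0 - 0) ^ 2) with 0 by ring. rewrite sqrt_0. exact Hd.
Qed.

Lemma omega1_ge0 d : 0 <= d -> 0 <= omega1 f d.
Proof.
  intros Hd. apply Rle_trans with (Rabs (f 0 0 - f 0 0)); [apply Rabs_pos|].
  apply le_omega1; try lra. rewrite Rminus_0_r, Rabs_R0. exact Hd.
Qed.

Lemma omega2_ge0 d : 0 <= d -> 0 <= omega2 f d.
Proof.
  intros Hd. apply Rle_trans with (Rabs (f 0 0 - f 0 0)); [apply Rabs_pos|].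
  apply le_omega2; try lra. rewrite Rminus_0_r, Rabs_R0. exact Hd.
Qed.

Lemma omega_quadratic_bound d t s x y :
  0 <= d -> 0 < d \/ (t = x /\ s = y) -> inX t s -> inX x y ->
  Rabs (f t s - f x y) <= omega f d + omega f d / d ^ 2 * ((t - x) ^ 2 + (s - y) ^ 2).
Proof.
  intros Hd Hdeg [Ht Hs] [Hx Hy]. pose proof (omega_ge0 d Hd) as HW.
  destruct Hdeg as [Hd0 | [-> ->]].
  2: { replace (f x y - f x y) with 0 by ring. rewrite Rabs_R0.
       replace ((x - x) ^ 2 + (y - y) ^ 2) with 0 by ring. lra. }
  set (L := sqrt ((t - x) ^ 2 + (s - y) ^ 2)).
  assert (HL : (t - x) ^ 2 + (s - y) ^ 2 = L ^ 2).
  { symmetry. apply pow2_sqrt. apply Rplus_le_le_0_compat; apply pow2_ge_0. }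
  set (g r := f (t + r * (x - t)) (s + r * (y - s))).
  replace (f t s) with (g 0) by (unfold g; f_equal; ring).
  replace (f x y) with (g 1) by (unfold g; f_equal; ring).
  rewrite HL. apply segment_oscillation_le; [apply sqrt_pos | exact Hd0 | exact HW |].
  intros r r' Hr Hr' Hrr'. apply le_omega; [split; nra | split; nra |].
  replace ((t + r * (x - t) - (t + r' * (x - t))) ^ 2 + (s + r * (y - s) - (s + r' * (y - s))) ^ 2)
    with (Rabs (r - r') ^ 2 * ((t - x) ^ 2 + (s - y) ^ 2)) by (rewrite pow2_abs; ring).
  rewrite sqrt_mult_alt, sqrt_pow2 by (apply pow2_ge_0 || apply Rabs_pos). exact Hrr'.
Qed.

Lemma omega1_quadratic_bound d t x s :
  0 <= d -> 0 < d \/ t = x -> 0 <= t -> 0 <= x -> 0 <= s ->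
  Rabs (f t s - f x s) <= omega1 f d + omega1 f d / d ^ 2 * (t - x) ^ 2.
Proof.
  intros Hd Hdeg Ht Hx Hs. pose proof (omega1_ge0 d Hd) as HW.
  destruct Hdeg as [Hd0 | ->].
  2: { replace (f x s - f x s) with 0 by ring. rewrite Rabs_R0.
       replace ((x - x) ^ 2) with 0 by ring. lra. }
  set (g r := f (t + r * (x - t)) s).
  replace (f t s) with (g 0) by (unfold g; f_equal; ring).
  replace (f x s) with (g 1) by (unfold g; f_equal; ring).
  rewrite <- (pow2_abs (t - x)).
  apply segment_oscillation_le; [apply Rabs_pos | exact Hd0 | exact HW |].
  intros r r' Hr Hr' Hrr'. apply le_omega1; [nra | nra | exact Hs |].
  replace (t + r * (x - t) - (t + r' * (x - t))) with ((r - r') * (x - t)) by ring.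
  rewrite Rabs_mult, (Rabs_minus_sym x t). exact Hrr'.
Qed.

Lemma omega2_quadratic_bound d x s y :
  0 <= d -> 0 < d \/ s = y -> 0 <= x -> 0 <= s -> 0 <= y ->
  Rabs (f x s - f x y) <= omega2 f d + omega2 f d / d ^ 2 * (s - y) ^ 2.
Proof.
  intros Hd Hdeg Hx Hs Hy. pose proof (omega2_ge0 d Hd) as HW.
  destruct Hdeg as [Hd0 | ->].
  2: { replace (f x y - f x y) with 0 by ring. rewrite Rabs_R0.
       replace ((y - y) ^ 2) with 0 by ring. lra. }
  set (g r := f x (s + r * (y - s))).
  replace (f x s) with (g 0) by (unfold g; f_equal; ring).
  replace (f x y) with (g 1) by (unfold g; f_equal; ring).
  rewrite <- (pow2_abs (s - y)).
  apply segment_oscillation_le; [apply Rabs_pos | exact Hd0 | exact HW |].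
  intros r r' Hr Hr' Hrr'. apply le_omega2; [exact Hx | nra | nra |].
  replace (s + r * (y - s) - (s + r' * (y - s))) with ((r - r') * (y - s)) by ring.
  rewrite Rabs_mult, (Rabs_minus_sym y s). exact Hrr'.
Qed.

Lemma omega12_quadratic_bound d1 d2 t s x y :
  0 <= d1 -> 0 <= d2 -> 0 < d1 \/ t = x -> 0 < d2 \/ s = y -> inX t s -> inX x y ->
  Rabs (f t s - f x y) <= omega1 f d1 + omega2 f d2
    + omega1 f d1 / d1 ^ 2 * (t - x) ^ 2 + omega2 f d2 / d2 ^ 2 * (s - y) ^ 2.
Proof.
  intros Hd1 Hd2 Hdeg1 Hdeg2 [Ht Hs] [Hx Hy].
  replace (f t s - f x y) with ((f t s - f x s) + (f x s - f x y)) by ring.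
  eapply Rle_trans; [apply Rabs_triang|].
  pose proof (omega1_quadratic_bound d1 t x s Hd1 Hdeg1 Ht Hx Hs).
  pose proof (omega2_quadratic_bound d2 x s y Hd2 Hdeg2 Hx Hs Hy). lra.
Qed.

End Moduli.

Lemma ln_gt0 a : 1 < a -> 0 < ln a.
Proof. intros Ha. rewrite <- ln_1. apply ln_increasing; lra. Qed.

Lemma aroot_gt1 a m : 1 < a -> (1 <= m)%nat -> 1 < aroot a m.
Proof.
  intros Ha Hm. unfold aroot, Rpower. rewrite <- exp_0. apply exp_increasing.
  apply Rmult_lt_0_compat; [apply Rinv_0_lt_compat, lt_0_INR; lia | apply ln_gt0, Ha].
Qed.

Definition poisson_rate (a : R) (m : nat) (x : R) : R := x * ln a / (aroot a m - 1).

Lemma poisson_rate_ge0 a m x : 1 < a -> (1 <= m)%nat -> 0 <= x -> 0 <= poisson_rate a m x.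
Proof.
  intros Ha Hm Hx. pose proof (aroot_gt1 a m Ha Hm). pose proof (ln_gt0 a Ha).
  unfold poisson_rate. apply Rdiv_le_0_compat; [apply Rmult_le_pos|]; lra.
Qed.

Lemma node_ge0 k m : (1 <= m)%nat -> 0 <= INR k / INR m.
Proof. intros Hm. apply Rdiv_le_0_compat; [apply pos_INR | apply lt_0_INR; lia]. Qed.

Lemma s_kernel_poisson a m n k1 k2 x y : 1 < a -> (1 <= m)%nat -> (1 <= n)%nat ->
  s_kernel a m n k1 k2 x y = poisson (poisson_rate a m x) k1 * poisson (poisson_rate a n y) k2.
Proof.
  intros Ha Hm Hn. pose proof (aroot_gt1 a m Ha Hm). pose proof (aroot_gt1 a n Ha Hn).
  assert (aroot a m - 1 <> 0) by lra. assert (aroot a n - 1 <> 0) by lra.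
  pose proof (pow_nonzero _ k1 H1). pose proof (pow_nonzero _ k2 H2).
  pose proof (INR_fact_neq_0 k1). pose proof (INR_fact_neq_0 k2).
  unfold s_kernel, poisson, poisson_rate, Rpower.
  replace (- (x / (aroot a m - 1)) * ln a) with (- (x * ln a / (aroot a m - 1))) by (field; lra).
  replace (- (y / (aroot a n - 1)) * ln a) with (- (y * ln a / (aroot a n - 1))) by (field; lra).
  unfold Rdiv. rewrite !Rpow_mult_distr, !pow_inv, pow_add. field. tauto.
Qed.

Lemma Yhat_poisson a m n f x y : 1 < a -> (1 <= m)%nat -> (1 <= n)%nat ->
  Yhat a m n f x y = Series (fun k1 => poisson (poisson_rate a m x) k1 *
    Series (fun k2 => poisson (poisson_rate a n y) k2 * f (INR k1 / INR m) (INR k2 / INR n))).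
Proof.
  intros Ha Hm Hn. apply Series_ext. intros k1. rewrite <- Series_scal_l.
  apply Series_ext. intros k2. rewrite s_kernel_poisson by assumption. ring.
Qed.

Lemma delta_sq a m x : 1 < a -> (1 <= m)%nat -> 0 <= x ->
  delta a m x ^ 2 = (poisson_rate a m x / INR m - x) ^ 2 + poisson_rate a m x / INR m ^ 2.
Proof.
  intros Ha Hm Hx. pose proof (aroot_gt1 a m Ha Hm).
  assert (INR m <> 0) by (apply not_0_INR; lia).
  assert (E : x * (INR m ^ 2 * x * (aroot a m - 1) ^ 2
                   - (aroot a m - 1) * ln a * (2 * INR m * x - 1) + x * ln a ^ 2)
              / (INR m ^ 2 * (aroot a m - 1) ^ 2)
            = (poisson_rate a m x / INR m - x) ^ 2 + poisson_rate a m x / INR m ^ 2).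
  { unfold poisson_rate. field. split; lra. }
  unfold delta. rewrite E. apply pow2_sqrt.
  apply Rplus_le_le_0_compat; [apply pow2_ge_0|].
  apply Rdiv_le_0_compat; [apply poisson_rate_ge0; assumption | apply pow_lt, lt_0_INR; lia].
Qed.

Lemma is_series_poisson_delta a m x : 1 < a -> (1 <= m)%nat -> 0 <= x ->
  is_series (fun k => poisson (poisson_rate a m x) k * (INR k / INR m - x) ^ 2) (delta a m x ^ 2).
Proof.
  intros Ha Hm Hx. rewrite delta_sq by assumption.
  apply is_series_poisson_sq_dev, not_0_INR. lia.
Qed.

Lemma delta_pos_or_node_eq a m x k : 1 < a -> (1 <= m)%nat -> 0 <= x ->
  poisson (poisson_rate a m x) k <> 0 -> 0 < delta a m x \/ INR k / INR m = x.
Proof.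
  intros Ha Hm Hx Hk. destruct (Rle_lt_or_eq_dec 0 x Hx) as [Hx0 | <-].
  - left. pose proof (aroot_gt1 a m Ha Hm). pose proof (ln_gt0 a Ha).
    assert (Hu : 0 < poisson_rate a m x).
    { unfold poisson_rate. apply Rdiv_lt_0_compat; [apply Rmult_lt_0_compat|]; lra. }
    assert (Hm2 : 0 < INR m ^ 2) by (apply pow_lt, lt_0_INR; lia).
    assert (Hsq : 0 < delta a m x ^ 2).
    { rewrite delta_sq by assumption.
      pose proof (pow2_ge_0 (poisson_rate a m x / INR m - x)).
      pose proof (Rdiv_lt_0_compat _ _ Hu Hm2). lra. }
    destruct (Rle_lt_or_eq_dec 0 (delta a m x) (sqrt_pos _)) as [|E]; [assumption|].
    rewrite <- E in Hsq. lra.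
  - right. unfold poisson_rate in Hk. rewrite Rmult_0_l, Rdiv_0_l in Hk.
    rewrite (poisson0_support k Hk). simpl. unfold Rdiv. ring.
Qed.

Lemma delta2_sq a m n x y : delta2 a m n x y ^ 2 = delta a m x ^ 2 + delta a n y ^ 2.
Proof. apply pow2_sqrt, Rplus_le_le_0_compat; apply pow2_ge_0. Qed.

Lemma delta2_pos_or a m n x y (P Q : Prop) :
  0 < delta a m x \/ P -> 0 < delta a n y \/ Q -> 0 < delta2 a m n x y \/ (P /\ Q).
Proof.
  intros [Hm | HP] [Hn | HQ]; try (right; split; assumption); left; apply sqrt_lt_R0.
  - pose proof (pow_lt _ 2 Hm). pose proof (pow2_ge_0 (delta a n y)). lra.
  - pose proof (pow_lt _ 2 Hm). pose proof (pow2_ge_0 (delta a n y)). lra.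
  - pose proof (pow_lt _ 2 Hn). pose proof (pow2_ge_0 (delta a m x)). lra.
Qed.

Lemma add_div_mul_le W D : 0 <= W -> W + W / D * D <= 2 * W.
Proof.
  intros HW. destruct (Req_dec D 0) as [-> | HD].
  - rewrite Rmult_0_r. lra.
  - replace (W / D * D) with W by (field; exact HD). lra.
Qed.

Lemma Yhat_dist_le a m n f x y M A C1 C2 :
  1 < a -> (1 <= m)%nat -> (1 <= n)%nat -> 0 <= x -> 0 <= y ->
  (forall x' y', inX x' y' -> Rabs (f x' y') <= M) ->
  (forall k1 k2 : nat,
     0 < delta a m x \/ INR k1 / INR m = x -> 0 < delta a n y \/ INR k2 / INR n = y ->
     Rabs (f (INR k1 / INR m) (INR k2 / INR n) - f x y)
       <= A + C1 * (INR k1 / INR m - x) ^ 2 + C2 * (INR k2 / INR n - y) ^ 2) ->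
  Rabs (Yhat a m n f x y - f x y) <= A + C1 * delta a m x ^ 2 + C2 * delta a n y ^ 2.
Proof.
  intros Ha Hm Hn Hx Hy HM Hnodes. rewrite Yhat_poisson by assumption.
  apply Series_iterated_mean_dist_le with (M := M)
    (e1 := fun k => (INR k / INR m - x) ^ 2) (e2 := fun k => (INR k / INR n - y) ^ 2)
    (F := fun k1 k2 => f (INR k1 / INR m) (INR k2 / INR n)); try apply is_series_poisson.
  - intros k. apply poisson_ge0, poisson_rate_ge0; assumption.
  - intros k. apply poisson_ge0, poisson_rate_ge0; assumption.
  - apply is_series_poisson_delta; assumption.
  - apply is_series_poisson_delta; assumption.
  - intros k1 k2. apply HM. split; apply node_ge0; assumption.
  - intros k1 k2 Hk1 Hk2. apply Hnodes; apply delta_pos_or_node_eq; assumption.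
Qed.

Theorem mainTheorem3 (a : R) (f : R -> R -> R) :
  1 < a -> continuous_on_X f -> bounded_on_X f ->
  forall (m n : nat) (x y : R), (1 <= m)%nat -> (1 <= n)%nat -> inX x y ->
    Rabs (Yhat a m n f x y - f x y) <= 2 * omega f (delta2 a m n x y) /\
    Rabs (Yhat a m n f x y - f x y) <=
      2 * (omega1 f (delta a m x) + omega2 f (delta a n y)).
Proof.
  intros Ha _ [M HM] m n x y Hm Hn [Hx Hy].
  split.
  - set (d := delta2 a m n x y). set (W := omega f d).
    apply Rle_trans with (W + W / d ^ 2 * delta a m x ^ 2 + W / d ^ 2 * delta a n y ^ 2).
    + apply (Yhat_dist_le a m n f x y M); try assumption.
      intros k1 k2 H1 H2. rewrite Rplus_assoc, <- Rmult_plus_distr_l.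
      apply (omega_quadratic_bound f M HM); [apply sqrt_pos | apply delta2_pos_or; assumption
        | split; apply node_ge0; assumption | split; assumption].
    + rewrite Rplus_assoc, <- Rmult_plus_distr_l, <- delta2_sq.
      apply add_div_mul_le, (omega_ge0 f M HM), sqrt_pos.
  - set (W1 := omega1 f (delta a m x)). set (W2 := omega2 f (delta a n y)).
    apply Rle_trans with (W1 + W2 + W1 / delta a m x ^ 2 * delta a m x ^ 2
                                  + W2 / delta a n y ^ 2 * delta a n y ^ 2).
    + apply (Yhat_dist_le a m n f x y M); try assumption.
      intros k1 k2 H1 H2.
      apply (omega12_quadratic_bound f M HM); try apply sqrt_pos; try assumption;
        split; try apply node_ge0; assumption.
    + pose proof (add_div_mul_le W1 (delta a m x ^ 2) (omega1_ge0 f M HM _ (sqrt_pos _))).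
      pose proof (add_div_mul_le W2 (delta a n y ^ 2) (omega2_ge0 f M HM _ (sqrt_pos _))). lra.
Qed.
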